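(* Let $\phi:\mathbb{R}^d\to\mathbb{R}^k$ be a differentiable feature map with $\sup_{\boldsymbol{x}}\|\phi(\boldsymbol{x})\|_2\le B$ and $\sup_{\boldsymbol{x}}\|J_\phi(\boldsymbol{x})\|_F\le L$, where $J_\phi(\boldsymbol{x})\in\mathbb{R}^{k\times d}$ is the Jacobian. Let $\Lambda>0$ and define $$\mathcal{F}_{\mathrm{unc}} = \{\boldsymbol{x}\mapsto \boldsymbol{W}\phi(\boldsymbol{x}) : \boldsymbol{W}\in\mathbb{R}^{d\times k},\ \|\boldsymbol{W}\|_F\le\Lambda\},\qquad \mathcal{F}_{\mathrm{cons}} = \{\boldsymbol{x}\mapsto J_\phi(\boldsymbol{x})^\top\boldsymbol{w} : \boldsymbol{w}\in\mathbb{R}^k,\ \|\boldsymbol{w}\|_2\le\Lambda\}$$ (the latter being the gradients of the potentials $\boldsymbol{x}\mapsto\boldsymbol{w}^\top\phi(\boldsymbol{x})$). For a sample $S=\{\boldsymbol{x}_1,\dots,\boldsymbol{x}_n\}\subset\mathbb{R}^d$ and a class $\mathcal{F}$ of functions $\mathbb{R}^d\to\mathbb{R}^d$, define the empirical Rademacher complexity $$\hat{\mathfrak{R}}_S(\mathcal{F}) = \frac{1}{n}\mathbb{E}_{\boldsymbol{\sigma}}\left[\sup_{f\in\mathcal{F}}\sum_{i=1}^n\langle\boldsymbol{\sigma}_i, f(\boldsymbol{x}_i)\rangle\right],$$ where $\boldsymbol{\sigma}_1,\dots,\boldsymbol{\sigma}_n$ are independent, each uniformly distributed on $\{-1,1\}^d$.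 Then $$\hat{\mathfrak{R}}_S(\mathcal{F}_{\mathrm{unc}})\le\frac{\Lambda B\sqrt{d}}{\sqrt{n}},\qquad \hat{\mathfrak{R}}_S(\mathcal{F}_{\mathrm{cons}})\le\frac{\Lambda L}{\sqrt{n}}.$$ *)

From HB Require Import structures.
From mathcomp Require Import all_boot all_order all_algebra.
From mathcomp Require Import all_classical all_reals all_analysis.
Set Implicit Arguments. Unset Strict Implicit. Unset Printing Implicit Defensive.
Import Order.TTheory GRing.Theory Num.Theory.
Local Open Scope ring_scope.
Local Open Scope classical_set_scope.

(* Frobenius norm of a matrix (for a row vector this is the Euclidean 2-norm). *)
Definition frob (R : realType) m n (A : 'M[R]_(m, n)) : R :=
  Num.sqrt (\sum_(i < m) \sum_(j < n) A i j ^+ 2).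

(* Paper's Jacobian J_phi(x) in R^{k x d}: (J)_{ij} = d phi_i / d x_j.
   The library's [jacobian] is d x k (row-vector convention), so transpose. *)
Definition Jac (R : realType) d k (phi : 'rV[R]_d -> 'rV[R]_k) (x : 'rV[R]_d)
  : 'M[R]_(k, d) := (jacobian phi x)^T.

(* F_unc: x |-> W phi(x), W in R^{d x k}, ||W||_F <= Lam (as row vectors: phi(x) W^T) *)
Definition F_unc (R : realType) d k (phi : 'rV[R]_d -> 'rV[R]_k) (Lam : R)
  : set ('rV[R]_d -> 'rV[R]_d) :=
  [set f | exists W : 'M[R]_(d, k), frob W <= Lam /\
           f = (fun x => phi x *m W^T)].

(* F_cons: x |-> J_phi(x)^T w, ||w||_2 <= Lam (as row vectors: w^T J_phi(x)) *)
Definition F_cons (R : realType) d k (phi : 'rV[R]_d -> 'rV[R]_k) (Lam : R)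
  : set ('rV[R]_d -> 'rV[R]_d) :=
  [set f | exists w : 'rV[R]_k, frob w <= Lam /\
           f = (fun x => w *m Jac phi x)].

Definition sgnb (R : realType) (b : bool) : R := if b then 1 else -1.

(* The expectation over sigma uniform on ({-1,1}^d)^n is the
   average over all 2^(n d) sign patterns s : {ffun 'I_n * 'I_d -> bool}. *)
Definition emp_rademacher (R : realType) d n (F : set ('rV[R]_d -> 'rV[R]_d))
  (xs : 'I_n -> 'rV[R]_d) : R :=
  n%:R^-1 * ((2 ^ (n * d))%:R^-1 *
    \sum_(s : {ffun 'I_n * 'I_d -> bool})
      sup [set (\sum_(i < n) \sum_(j < d) sgnb R (s (i, j)) * f (xs i) 0 j)
           | f in F]).

From HB Require Import structures.
From mathcomp Require Import all_boot all_order all_algebra.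
From mathcomp Require Import all_classical all_reals all_analysis.
From mathcomp Require Import ring lra.
Import Order.TTheory GRing.Theory Num.Theory.
Local Open Scope ring_scope.
Local Open Scope classical_set_scope.
Set Implicit Arguments. Unset Strict Implicit.

(* Both classes are linear images of a Frobenius ball: f(x_i)_j is the
   Frobenius inner product <A, C_ij> of a parameter matrix A with
   ||A||_F <= Lam and a fixed matrix C_ij (the matrix whose j-th row is
   phi(x_i) for F_unc, the j-th column of J_phi(x_i) for F_cons).  For a sign
   pattern s the supremum is thus at most Lam ||sum_ij s_ij C_ij||_F by
   Cauchy-Schwarz.  Averaging over s, Jensen's inequality and the
   orthogonality of independent signs give
   E ||sum_ij s_ij C_ij||_F <= sqrt (sum_ij ||C_ij||_F^2) <= sqrt n K
   as soon as sum_j ||C_ij||_F^2 <= K^2 for each i; here K = B sqrt d and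
   K = L respectively. *)

Section CauchySchwarz.
Variables (R : realType) (I : finType).

Lemma CauchySchwarz_sum (a b : I -> R) :
  \sum_i a i * b i <= Num.sqrt (\sum_i a i ^+ 2) * Num.sqrt (\sum_i b i ^+ 2).
Proof.
have sqr_sum_ge0 (c : I -> R) : 0 <= \sum_i c i ^+ 2.
  by apply: sumr_ge0 => i _; exact: sqr_ge0.
have lagrange : \sum_i \sum_j (a i * b j - a j * b i) ^+ 2 =
    2 * ((\sum_i a i ^+ 2) * (\sum_i b i ^+ 2)) - 2 * (\sum_i a i * b i) ^+ 2.
  transitivity (\sum_i \sum_j (a i ^+ 2 * b j ^+ 2 + b i ^+ 2 * a j ^+ 2
      - 2 * ((a i * b i) * (a j * b j)))).
    by apply: eq_bigr => i _; apply: eq_bigr => j _; ring.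
  under eq_bigr do rewrite sumrB big_split /= -!mulr_sumr.
  by rewrite sumrB big_split /= -!mulr_suml -mulr_sumr -mulr_suml expr2; ring.
have lagrange_ge0 : 0 <= \sum_i \sum_j (a i * b j - a j * b i) ^+ 2.
  by apply: sumr_ge0 => i _; exact: sqr_sum_ge0.
rewrite -sqrtrM ?sqr_sum_ge0 // (le_trans (ler_norm _)) // -sqrtr_sqr ler_sqrt.
  by lra.
by rewrite mulr_ge0 ?sqr_sum_ge0.
Qed.

Lemma sum_le_sqrt_card_sum_sqr (G : I -> R) :
  \sum_i G i <= Num.sqrt (#|I|%:R * \sum_i G i ^+ 2).
Proof.
have := CauchySchwarz_sum (fun=> 1) G.
rewrite sqrtrM ?ler0n // expr1n sumr_const; by under eq_bigr do rewrite mul1r.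
Qed.

End CauchySchwarz.

Section Frobenius.
Variable R : realType.

Definition frob_dot m p (A B : 'M[R]_(m, p)) : R := \sum_i \sum_j A i j * B i j.

Lemma frob_ge0 m p (A : 'M[R]_(m, p)) : 0 <= frob A.
Proof. exact: sqrtr_ge0. Qed.

Lemma frob_sqr m p (A : 'M[R]_(m, p)) : frob A ^+ 2 = \sum_i \sum_j A i j ^+ 2.
Proof.
by rewrite sqr_sqrtr //; apply: sumr_ge0 => i _; apply: sumr_ge0 => j _; exact: sqr_ge0.
Qed.

Lemma frob_tr m p (A : 'M[R]_(m, p)) : frob A^T = frob A.
Proof.
rewrite /frob exchange_big; congr Num.sqrt.
by apply: eq_bigr => j _; apply: eq_bigr => i _; rewrite mxE.
Qed.

Lemma sum_frob_row_sqr m p (A : 'M[R]_(m, p)) :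
  \sum_i frob (row i A) ^+ 2 = frob A ^+ 2.
Proof.
rewrite frob_sqr; apply: eq_bigr => i _.
by rewrite frob_sqr big_ord1; apply: eq_bigr => j _; rewrite mxE.
Qed.

Lemma frob0 m p : frob (0 : 'M[R]_(m, p)) = 0.
Proof.
by rewrite /frob big1 ?sqrtr0 // => i _; apply: big1 => j _; rewrite mxE expr0n.
Qed.

Lemma frob_dot_le m p (A B : 'M[R]_(m, p)) : frob_dot A B <= frob A * frob B.
Proof.
have := CauchySchwarz_sum (fun q : 'I_m * 'I_p => A q.1 q.2) (fun q => B q.1 q.2).
rewrite /frob_dot /frob -(pair_bigA _ (fun i j => A i j * B i j)).
rewrite -(pair_bigA _ (fun i j => A i j ^+ 2)).
by rewrite -(pair_bigA _ (fun i j => B i j ^+ 2)).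
Qed.

Lemma frob_dot_sumr (I : finType) m p (A : 'M[R]_(m, p)) (c : I -> R) C :
  \sum_q c q * frob_dot A (C q) = frob_dot A (\sum_q c q *: C q).
Proof.
under eq_bigr do rewrite /frob_dot mulr_sumr; rewrite /frob_dot exchange_big.
apply: eq_bigr => i _; under eq_bigr do rewrite mulr_sumr; rewrite exchange_big.
apply: eq_bigr => j _; rewrite summxE mulr_sumr.
by apply: eq_bigr => q _; rewrite mxE; ring.
Qed.

Lemma frob_dot_row m p (u : 'rV[R]_p) (A : 'M[R]_(m, p)) j :
  frob_dot u (row j A) = (u *m A^T) 0 j.
Proof. by rewrite /frob_dot big_ord1 mxE; apply: eq_bigr => l _; rewrite !mxE. Qed.

Lemma delta_mulmxE m p (v : 'rV[R]_p) (j a : 'I_m) l :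
  (delta_mx j 0 *m v) a l = (a == j)%:R * v 0 l.
Proof. by rewrite mxE big_ord1 mxE andbT. Qed.

Lemma frob_dot_delta_mul m p (A : 'M[R]_(m, p)) (v : 'rV[R]_p) j :
  frob_dot A (delta_mx j 0 *m v) = (v *m A^T) 0 j.
Proof.
rewrite /frob_dot (bigD1 j) //= [X in _ + X]big1 ?addr0 => [|a naj].
  by rewrite mxE; apply: eq_bigr => l _; rewrite delta_mulmxE eqxx mul1r mxE mulrC.
by apply: big1 => l _; rewrite delta_mulmxE (negbTE naj) mul0r mulr0.
Qed.

Lemma frob_delta_mul m p (v : 'rV[R]_p) (j : 'I_m) :
  frob (delta_mx j 0 *m v) = frob v.
Proof.
rewrite /frob big_ord1 (bigD1 j) //= [X in _ + X]big1 ?addr0 => [|a naj].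
  by congr Num.sqrt; apply: eq_bigr => l _; rewrite delta_mulmxE eqxx mul1r.
by apply: big1 => l _; rewrite delta_mulmxE (negbTE naj) mul0r expr0n.
Qed.

End Frobenius.

Section RademacherSigns.
Variables (R : realType) (I : finType).
Local Notation signs := {ffun I -> bool}.
Implicit Types (s : signs) (p q : I).

Lemma sgnbN b : sgnb R (~~ b) = - sgnb R b.
Proof. by case: b; rewrite /sgnb ?opprK. Qed.

Lemma sgnb_sqr b : sgnb R b ^+ 2 = 1.
Proof. by case: b; rewrite /sgnb ?sqrrN expr1n. Qed.

(* Flipping the sign at p is an involution of the sign patterns that negates
   each term. *)
Lemma sum_sgnb_mul_neq p q : p != q ->
  \sum_(s : signs) sgnb R (s p) * sgnb R (s q) = 0.
Proof.
move=> npq; pose flip s : {ffun I -> bool} := [ffun x => (x == p) (+) s x].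
have flipK : involutive flip.
  by move=> s; apply/ffunP => x; rewrite !ffunE addbA addbb.
have flip_sum : \sum_(s : signs) sgnb R (s p) * sgnb R (s q) =
            \sum_(s : signs) - (sgnb R (s p) * sgnb R (s q)).
  rewrite (reindex_inj (inv_inj flipK)); apply: eq_bigr => s _.
  by rewrite !ffunE eqxx eq_sym (negbTE npq) sgnbN mulNr.
by move: flip_sum; rewrite sumrN; lra.
Qed.

Lemma sum_rademacher_sqr (c : I -> R) :
  \sum_(s : signs) (\sum_p sgnb R (s p) * c p) ^+ 2 = #|signs|%:R * \sum_p c p ^+ 2.
Proof.
transitivity (\sum_(s : signs) \sum_p \sum_q
                c p * c q * (sgnb R (s p) * sgnb R (s q))).
  apply: eq_bigr => s _; rewrite expr2 mulr_suml; apply: eq_bigr => p _.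
  by rewrite mulr_sumr; apply: eq_bigr => q _; ring.
rewrite exchange_big; under eq_bigr do rewrite exchange_big.
under eq_bigr do under eq_bigr do rewrite -mulr_sumr.
rewrite mulr_sumr; apply: eq_bigr => p _.
rewrite (bigD1 p) //= [X in _ + X]big1 => [|q nqp]; last first.
  by rewrite sum_sgnb_mul_neq ?mulr0 // eq_sym.
under eq_bigr do rewrite -expr2 sgnb_sqr.
by rewrite sumr_const addr0 -expr2 mulrC.
Qed.

End RademacherSigns.

Section LinearClasses.
Variables (R : realType) (I : finType).
Local Notation signs := {ffun I -> bool}.

Lemma sum_sup_linear_le m p (C : I -> 'M[R]_(m, p)) (Lam : R)
    (V : signs -> set R) :
  (forall s, V s !=set0) ->
  (forall s x, V s x -> exists2 A,
     frob A <= Lam & x = \sum_q sgnb R (s q) * frob_dot A (C q)) ->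
  \sum_(s : signs) sup (V s) <=
    #|signs|%:R * (Lam * Num.sqrt (\sum_q frob (C q) ^+ 2)).
Proof.
move=> V_ne V_lin; pose X (s : signs) := \sum_q sgnb R (s q) *: C q.
have Lam_ge0 : 0 <= Lam.
  have [x /V_lin[A + _]] := V_ne [ffun=> true]; exact: le_trans (frob_ge0 A).
have sup_le s : sup (V s) <= Lam * frob (X s).
  apply: ge_sup => // _ /V_lin[A A_le ->]; rewrite frob_dot_sumr.
  by apply: le_trans (frob_dot_le _ _) _; rewrite ler_wpM2r ?frob_ge0.
have sum_frob_sqr : \sum_s frob (X s) ^+ 2 = #|signs|%:R * \sum_q frob (C q) ^+ 2.
  under eq_bigr do rewrite frob_sqr.
  transitivity (\sum_a \sum_b #|signs|%:R * \sum_q C q a b ^+ 2).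
    rewrite exchange_big; apply: eq_bigr => a _.
    rewrite exchange_big; apply: eq_bigr => b _.
    rewrite -sum_rademacher_sqr; apply: eq_bigr => s _.
    by rewrite summxE; congr (_ ^+ 2); apply: eq_bigr => q _; rewrite mxE.
  under eq_bigr do rewrite -mulr_sumr; rewrite -mulr_sumr; congr (_ * _).
  under [RHS]eq_bigr do rewrite frob_sqr.
  by rewrite [RHS]exchange_big; apply: eq_bigr => a _; rewrite exchange_big.
apply: le_trans (ler_sum _ (fun s _ => sup_le s)) _; rewrite -mulr_sumr mulrCA.
apply: ler_wpM2l => //; apply: le_trans (sum_le_sqrt_card_sum_sqr _) _.
by rewrite sum_frob_sqr mulrA sqrtrM ?mulr_ge0 // sqrtr_sqr normr_nat.
Qed.

End LinearClasses.

Lemma card_signs (R : realType) n d :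
  (2 ^ (n * d))%:R = #|{ffun 'I_n * 'I_d -> bool}|%:R :> R.
Proof. by rewrite card_ffun card_bool card_prod !card_ord. Qed.

Lemma emp_rademacher_linear_le (R : realType) d n m p
    (F : set ('rV[R]_d -> 'rV[R]_d)) (xs : 'I_n -> 'rV[R]_d)
    (C : 'I_n -> 'I_d -> 'M[R]_(m, p)) (Lam K : R) :
  (0 < n)%N -> 0 <= K -> F !=set0 ->
  (forall f, F f -> exists2 A,
     frob A <= Lam & forall i j, f (xs i) 0 j = frob_dot A (C i j)) ->
  (forall i, \sum_j frob (C i j) ^+ 2 <= K ^+ 2) ->
  emp_rademacher F xs <= Lam * K / Num.sqrt n%:R.
Proof.
move=> n_gt0 K_ge0 [f0 Ff0] F_lin C_le.
have Lam_ge0 : 0 <= Lam.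
  by have [A + _] := F_lin f0 Ff0; exact: le_trans (frob_ge0 A).
pose S := \sum_(q : 'I_n * 'I_d) frob (C q.1 q.2) ^+ 2.
have sqrtS_le : Num.sqrt S <= Num.sqrt n%:R * K.
  rewrite -(ger0_norm K_ge0) -sqrtr_sqr -sqrtrM ?ler0n //.
  rewrite ler_sqrt ?mulr_ge0 ?ler0n ?sqr_ge0 //.
  rewrite /S -(pair_bigA _ (fun i j => frob (C i j) ^+ 2)).
  apply: le_trans (ler_sum _ (fun i _ => C_le i)) _.
  by rewrite sumr_const card_ord mulr_natl.
rewrite /emp_rademacher card_signs.
apply: (le_trans (y := n%:R^-1 * (Lam * Num.sqrt S))).
  rewrite ler_wpM2l ?invr_ge0 ?ler0n // ler_pdivrMl; last first.
    by rewrite ltr0n card_ffun expn_gt0 card_bool.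
  apply: (sum_sup_linear_le (C := fun q : 'I_n * 'I_d => C q.1 q.2)).
    by move=> s; eexists; exists f0.
  move=> s _ [f Ff <-].
  have [A A_le f_lin] := F_lin f Ff; exists A => //.
  by rewrite pair_bigA; apply: eq_bigr => -[i j] _; rewrite f_lin.
apply: (le_trans (y := n%:R^-1 * (Lam * (Num.sqrt n%:R * K)))).
  by rewrite ler_wpM2l ?invr_ge0 ?ler0n // ler_wpM2l.
rewrite -{1}(sqr_sqrtr (ler0n R n)) le_eqVlt; apply/predU1l.
by field; rewrite gt_eqF // sqrtr_gt0 ltr0n.
Qed.

Section FeatureClasses.
Variables (R : realType) (d k n : nat) (phi : 'rV[R]_d -> 'rV[R]_k).
Variables (Lam : R) (xs : 'I_n -> 'rV[R]_d).
Hypotheses (Lam_ge0 : 0 <= Lam) (n_gt0 : (0 < n)%N).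

Lemma emp_rademacher_F_unc (B : R) : (forall x, frob (phi x) <= B) ->
  emp_rademacher (F_unc phi Lam) xs <= Lam * B * Num.sqrt d%:R / Num.sqrt n%:R.
Proof.
move=> phi_le; have B_ge0 : 0 <= B := le_trans (frob_ge0 _) (phi_le 0).
rewrite -(mulrA Lam).
apply: (emp_rademacher_linear_le (C := fun i j => delta_mx j 0 *m phi (xs i))) => //.
- by rewrite mulr_ge0 ?sqrtr_ge0.
- by exists (fun x => phi x *m 0^T), 0; rewrite frob0.
- by move=> _ [W [W_le ->]]; exists W => // i j; rewrite frob_dot_delta_mul.
move=> i; under eq_bigr do rewrite frob_delta_mul.
rewrite sumr_const card_ord exprMn (sqr_sqrtr (ler0n R d)) mulr_natr lerMn2r.
by rewrite ler_sqr ?nnegrE ?frob_ge0 // phi_le orbT.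
Qed.

Lemma emp_rademacher_F_cons (L : R) : (forall x, frob (Jac phi x) <= L) ->
  emp_rademacher (F_cons phi Lam) xs <= Lam * L / Num.sqrt n%:R.
Proof.
move=> Jac_le; have L_ge0 : 0 <= L := le_trans (frob_ge0 _) (Jac_le 0).
apply: (emp_rademacher_linear_le (C := fun i j => row j (jacobian phi (xs i)))) => //.
- by exists (fun x => 0 *m Jac phi x), 0; rewrite frob0.
- by move=> _ [w [w_le ->]]; exists w => // i j; rewrite frob_dot_row.
by move=> i; rewrite sum_frob_row_sqr -frob_tr ler_sqr ?nnegrE ?frob_ge0 // Jac_le.
Qed.

End FeatureClasses.

Theorem theorem3p6 (R : realType) (d k n : nat) (phi : 'rV[R]_d -> 'rV[R]_k)
  (B L Lam : R) (xs : 'I_n -> 'rV[R]_d) :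
  (forall x, differentiable phi x) ->
  (forall x, frob (phi x) <= B) ->
  (forall x, frob (Jac phi x) <= L) ->
  0 < Lam -> (0 < n)%N ->
  emp_rademacher (F_unc phi Lam) xs <= Lam * B * Num.sqrt d%:R / Num.sqrt n%:R /\
  emp_rademacher (F_cons phi Lam) xs <= Lam * L / Num.sqrt n%:R.
Proof.
move=> _ phi_le Jac_le /ltW Lam_ge0 n_gt0; split.
- exact: emp_rademacher_F_unc.
- exact: emp_rademacher_F_cons.
Qed.
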